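(* Let $N$ be a finite nonempty set, $p\notin N$ and $N'=N\cup\{p\}$. Let $\mathscr{C}=\{S_1,\dots,S_k\}$ be a minimal balanced collection on $N$ with (unique) balancing weights $(\lambda_{S_i})_{i\in[k]}$. Let $I\subseteq[k]$ and $\delta\in[k]\setminus I$ satisfy $1>\lambda_I>1-\lambda_{S_\delta}$, where $\lambda_I=\sum_{i\in I}\lambda_{S_i}$. Then $$\mathscr{C}'=\{S_i\cup\{p\}\mid i\in I\}\cup\{S_i\mid i\in[k]\setminus I\}\cup\{S_\delta\cup\{p\}\}$$ is a minimal balanced collection on $N'$ (with balancing weights $\lambda_{S_i}$ for the sets coming from $S_i$, $i\neq\delta$, weight $1-\lambda_I$ for $S_\delta\cup\{p\}$ and weight $\lambda_{S_\delta}-(1-\lambda_I)$ for $S_\delta$).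
   Context: For $T\subseteq N$, $\mathbf{1}^T\in\mathbb{R}^N$ denotes the characteristic vector of $T$. A collection $\mathscr{B}$ of nonempty subsets of a finite set $N$ is balanced if there exist positive weights $(\lambda_S)_{S\in\mathscr{B}}$ (balancing weights) with $\sum_{S\in\mathscr{B}}\lambda_S\mathbf{1}^S=\mathbf{1}^N$. A balanced collection is minimal if it contains no balanced proper subcollection; equivalently, its system of balancing weights is unique. $[k]=\{1,\dots,k\}$. *)

From HB Require Import structures.
From mathcomp Require Import all_boot all_order all_algebra.
Set Implicit Arguments. Unset Strict Implicit. Unset Printing Implicit Defensive.
Import Order.TTheory GRing.Theory Num.Theory.
Local Open Scope ring_scope.

Definition charvec (R : realFieldType) (T : finType) (S : {set T}) : {ffun T -> R^o} :=
  [ffun x => (x \in S)%:R].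

Definition balanced (R : realFieldType) (T : finType) (N : {set T})
    (B : {set {set T}}) : Prop :=
  (forall S, S \in B -> S != set0 /\ S \subset N) /\
  exists lam : {set T} -> R,
    (forall S, S \in B -> 0 < lam S) /\
    \sum_(S in B) lam S *: charvec R S = charvec R N.

Definition minimal_balanced (R : realFieldType) (T : finType) (N : {set T})
    (B : {set {set T}}) : Prop :=
  balanced R N B /\ forall B' : {set {set T}}, B' \proper B -> ~ balanced R N B'.

From HB Require Import structures.
From mathcomp Require Import all_boot all_order all_algebra.
From mathcomp Require Import ring lra.
Set Implicit Arguments. Unset Strict Implicit. Unset Printing Implicit Defensive.
Import Order.TTheory GRing.Theory Num.Theory.
Local Open Scope ring_scope.

(* Index the sets of the new collection by pairs (i, b), where b says whether
   p is added to S i. Weights w on such pairs balance N + p iff the merged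
   weights w (i, true) + w (i, false) balance C and the sets containing p have
   total weight 1; the proposed weights satisfy both conditions. The weights of
   a balanced subcollection merge to the unique weights lam of C, vanish off the
   support and satisfy the equation at p; this leaves only the proposed weights,
   which are all positive, so no set can be dropped. *)

Lemma big_pair_bool (V : nmodType) (K : finType) (G : K * bool -> V) :
  \sum_j G j = \sum_i (G (i, true) + G (i, false)).
Proof.
rewrite (eq_bigr (fun j => G (j.1, j.2))); last by case.
by rewrite -(pair_bigA _ (fun i b => G (i, b))); apply: eq_bigr => i _; rewrite big_bool.
Qed.

Section BalancedCollections.
Variables (R : realFieldType) (T : finType).

Lemma sum_charvecP (N : {set T}) (J : finType) (P : pred J) (c : J -> R)
    (F : J -> {set T}) :
  \sum_(j | P j) c j *: charvec R (F j) = charvec R N <->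
  forall x, \sum_(j | P j) c j * (x \in F j)%:R = (x \in N)%:R.
Proof.
have sumE x : (\sum_(j | P j) c j *: charvec R (F j)) x
            = \sum_(j | P j) c j * (x \in F j)%:R.
  by rewrite sum_ffunE; apply: eq_bigr => j _; rewrite !ffunE.
split=> [/ffunP eqN x | eqN]; last by apply/ffunP => x; rewrite sumE ffunE.
by rewrite -sumE eqN ffunE.
Qed.

Lemma balanced_imset (N : {set T}) (J : finType) (F : J -> {set T})
    (A : {pred J}) (c : J -> R) :
  (forall j, j \in A -> F j != set0 /\ F j \subset N) ->
  (forall j, j \in A -> 0 < c j) ->
  \sum_(j in A) c j *: charvec R (F j) = charvec R N ->
  balanced R N [set F j | j in A].
Proof.
move=> FA c_gt0 c_bal; split; first by move=> X /imsetP [j jA ->]; exact: FA.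
exists (fun X => \sum_(j in A | F j == X) c j); split.
  move=> X /imsetP [j jA ->]; rewrite (bigD1 j) /= ?jA ?eqxx //.
  rewrite ltr_pwDl ?c_gt0 // sumr_ge0 // => l /andP [/andP [lA _] _].
  exact/ltW/c_gt0.
rewrite -c_bal (partition_big_imset F); apply: eq_bigr => X _.
by rewrite scaler_suml; apply: eq_bigr => j /andP [_ /eqP ->].
Qed.

Lemma balanced_sub_imset_weights (N : {set T}) (J : finType) (F : J -> {set T})
    (A : {pred J}) (B : {set {set T}}) :
  {in A &, injective F} -> balanced R N B -> B \subset [set F j | j in A] ->
  exists w : J -> R,
    [/\ forall j, 0 <= w j, forall j, j \in A -> 0 < w j -> F j \in B,
        forall j, j \notin A -> w j = 0
      & \sum_j w j *: charvec R (F j) = charvec R N].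
Proof.
move=> F_inj [_ [mu [mu_gt0 mu_bal]]] sBF.
pose A' := [set j in A | F j \in B].
exists (fun j => if j \in A' then mu (F j) else 0); split.
- by move=> j; case: ifP => [|//]; rewrite inE => /andP [_ /mu_gt0/ltW].
- by move=> j jA; rewrite inE jA; case: ifP; rewrite ?ltxx.
- by move=> j jNA; rewrite inE (negbTE jNA).
have BE : B = [set F j | j in A'].
  apply/setP => X; apply/idP/imsetP => [XB | [j]]; last first.
    by rewrite inE => /andP [_ ?] ->.
  have /imsetP [j jA eX] := subsetP sBF X XB.
  by exists j; rewrite // inE jA -eX XB.
have F_inj' : {in A' &, injective F}.
  by move=> i j; rewrite !inE => /andP [iA _] /andP [jA _]; exact: F_inj.
rewrite -mu_bal BE (big_imset _ F_inj') [RHS]big_mkcond.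
by apply: eq_bigr => j _; case: ifP; rewrite ?scale0r.
Qed.

Section MinimalFamily.
Variables (N : {set T}) (k : nat) (S : 'I_k -> {set T}).
Hypotheses (S_inj : injective S) (C_min : minimal_balanced R N [set S i | i : 'I_k]).

Lemma minimal_balanced_weight_gt0 (u : 'I_k -> R) :
  (forall i, 0 <= u i) -> \sum_i u i *: charvec R (S i) = charvec R N ->
  forall i, 0 < u i.
Proof.
move=> u_ge0 u_bal i0; rewrite lt_def u_ge0 andbT; apply/eqP => u0.
have [[C_sub _] C_proper] := C_min.
apply: (C_proper [set S i | i in [set i | 0 < u i]]).
  apply/properP; split; first by apply/subsetP => X /imsetP [j _ ->]; exact: imset_f.
  exists (S i0); first exact: imset_f.
  by apply/imsetP => -[j]; rewrite inE => uj /S_inj eqj; rewrite -eqj u0 ltxx in uj.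
apply: (balanced_imset (c := u)) => [j _ | j | ]; first exact/C_sub/imset_f.
  by rewrite inE.
rewrite -u_bal [RHS](bigID (fun i => 0 < u i)) /= [X in _ + X]big1 ?addr0.
  by apply: eq_bigl => i; rewrite inE.
by move=> i; rewrite lt_def u_ge0 andbT negbK => /eqP ->; rewrite scale0r.
Qed.

(* Let s be the least ratio w i / lam i. If s < 1, then (w - s lam) / (1 - s)
   would be nonnegative balancing weights vanishing at an argmin; so w >= lam,
   and a point of S i shows w i = lam i. *)
Lemma minimal_balanced_weightsE (lam w : 'I_k -> R) :
  (forall i, 0 < lam i) -> \sum_i lam i *: charvec R (S i) = charvec R N ->
  (forall i, 0 <= w i) -> \sum_i w i *: charvec R (S i) = charvec R N ->
  forall i, w i = lam i.
Proof.
move=> lam_gt0 /sum_charvecP lam_bal w_ge0 w_bal i.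
have /sum_charvecP w_bal' := w_bal.
have [i1 _ i1_min] := @arg_minP _ _ _ i xpredT (fun j => w j / lam j) isT.
set s := w i1 / lam i1 in i1_min.
have s_lam_le j : s * lam j <= w j by rewrite -ler_pdivlMr // i1_min.
have lam_le j : lam j <= w j.
  have [s_lt1 | s_ge1] := ltP s 1; last first.
    apply: le_trans (s_lam_le j); rewrite -[leLHS]mul1r ler_wpM2r // ltW //.
  pose u j := (w j - s * lam j) / (1 - s).
  have s_neq1 : 1 - s != 0 by rewrite subr_eq0 eq_sym lt_eqF.
  have u_bal : \sum_j u j *: charvec R (S j) = charvec R N.
    apply/sum_charvecP => x.
    transitivity ((\sum_j w j * (x \in S j)%:R
                   - s * \sum_j lam j * (x \in S j)%:R) / (1 - s)).
      by rewrite mulr_sumr -sumrB mulr_suml; apply: eq_bigr => l _; rewrite /u; ring.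
    by rewrite w_bal' lam_bal; field.
  have u_ge0 l : 0 <= u l by rewrite divr_ge0 ?subr_ge0 ?s_lam_le // ltW.
  have := minimal_balanced_weight_gt0 u_ge0 u_bal i1.
  by rewrite /u /s divfK ?subrr ?mul0r ?ltxx // lt0r_neq0.
have [[C_sub _] _] := C_min.
have [x xSi] : exists x, x \in S i.
  by apply/set0Pn; case: (C_sub (S i)) => //; exact: imset_f.
have diff0 : \sum_j (w j - lam j) * (x \in S j)%:R = 0.
  under eq_bigr do rewrite mulrBl.
  by rewrite sumrB w_bal' lam_bal subrr.
have terms_ge0 j : true -> 0 <= (w j - lam j) * (x \in S j)%:R.
  by rewrite mulr_ge0 ?subr_ge0.
have := psumr_eq0P terms_ge0 diff0 (i := i) isT.
by rewrite xSi mulr1 => /eqP; rewrite subr_eq0 => /eqP.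
Qed.

End MinimalFamily.
End BalancedCollections.

Section Extension.
Variables (R : realFieldType) (T : finType) (N : {set T}) (p : T) (k : nat).
Variables (S : 'I_k -> {set T}) (lam : 'I_k -> R) (I : {set 'I_k}) (delta : 'I_k).
Hypotheses (pNN : p \notin N) (S_inj : injective S).
Hypothesis C_min : minimal_balanced R N [set S i | i : 'I_k].
Hypothesis lam_gt0 : forall i, 0 < lam i.
Hypothesis lam_bal : \sum_i lam i *: charvec R (S i) = charvec R N.
Hypothesis deltaNI : delta \notin I.
Hypothesis lamI_lt1 : \sum_(i in I) lam i < 1.
Hypothesis lamI_gt : 1 - lam delta < \sum_(i in I) lam i.

Local Notation lamI := (\sum_(i in I) lam i).

Definition ext_set (j : 'I_k * bool) : {set T} := if j.2 then p |: S j.1 else S j.1.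

Definition ext_index : {set 'I_k * bool} :=
  [set j | if j.2 then (j.1 \in I) || (j.1 == delta) else j.1 \notin I].

Definition ext_weight (j : 'I_k * bool) : R :=
  let: (i, b) := j in
  if i \in I then (if b then lam i else 0)
  else if i == delta then (if b then 1 - lamI else lam delta - (1 - lamI))
  else (if b then 0 else lam i).

Lemma S_subset i : S i \subset N.
Proof. by have [[C_sub _] _] := C_min; case: (C_sub (S i)) => //; exact: imset_f. Qed.

Lemma S_neq0 i : S i != set0.
Proof. by have [[C_sub _] _] := C_min; case: (C_sub (S i)) => //; exact: imset_f. Qed.

Lemma p_notin_S i : p \notin S i.
Proof. by apply: contra pNN; exact: subsetP (S_subset i) p. Qed.

Lemma ext_set_inj : injective ext_set.
Proof.
move=> [i [|]] [j [|]]; rewrite /ext_set /= => eqij.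
- move: eqij => /(congr1 (fun X => X :\ p)).
  by rewrite !setU1K ?p_notin_S // => /S_inj ->.
- by have := p_notin_S j; rewrite -eqij setU11.
- by have := p_notin_S i; rewrite eqij setU11.
- by move/S_inj: eqij => ->.
Qed.

Lemma ext_collectionE :
  [set p |: S i | i in I] :|: [set S i | i in ~: I] :|: [set p |: S delta]
  = ext_set @: ext_index.
Proof.
apply/setP => X; rewrite !inE; apply/idP/imsetP => [|[[i [|]]]].
- case/orP => [/orP [] /imsetP [i iI ->] | /eqP ->].
  + by exists (i, true); rewrite // inE /= iI.
  + by exists (i, false); rewrite // inE /= -in_setC.
  + by exists (delta, true); rewrite // inE /= eqxx orbT.
- rewrite inE /ext_set /= => /orP [iI | /eqP ->] ->; last by rewrite eqxx orbT.
  by rewrite (imset_f (fun i => p |: S i) iI).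
- by rewrite inE /ext_set /= => iNI ->; rewrite (imset_f S) ?orbT // inE.
Qed.

Lemma ext_sum_at (w : 'I_k * bool -> R) x :
  \sum_j w j * (x \in ext_set j)%:R =
  if x == p then \sum_i w (i, true)
  else \sum_i (w (i, true) + w (i, false)) * (x \in S i)%:R.
Proof.
rewrite big_pair_bool; case: eqVneq => [-> | xNp]; apply: eq_bigr => i _.
  by rewrite /ext_set /= setU11 (negbTE (p_notin_S i)) mulr1 mulr0 addr0.
by rewrite /ext_set /= in_setU1 (negbTE xNp) mulrDl.
Qed.

Lemma ext_balancedP (w : 'I_k * bool -> R) :
  \sum_j w j *: charvec R (ext_set j) = charvec R (p |: N) <->
  \sum_i (w (i, true) + w (i, false)) *: charvec R (S i) = charvec R N
  /\ \sum_i w (i, true) = 1.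
Proof.
rewrite !sum_charvecP; split=> [w_bal | [w_bal w_p] x].
  split; last by have := w_bal p; rewrite ext_sum_at eqxx setU11.
  move=> x; have [-> | xNp] := eqVneq x p.
    by rewrite (negbTE pNN) big1 // => i _; rewrite (negbTE (p_notin_S i)) mulr0.
  by have := w_bal x; rewrite ext_sum_at in_setU1 (negbTE xNp).
rewrite ext_sum_at in_setU1; have [-> | xNp] := eqVneq x p; first by rewrite w_p.
exact: w_bal.
Qed.

Lemma ext_weight_merge i : ext_weight (i, true) + ext_weight (i, false) = lam i.
Proof.
rewrite /ext_weight; case: ifP => _; first by rewrite addr0.
by case: eqP => [-> | _]; rewrite ?add0r // addrC subrK.
Qed.

Lemma ext_weight_true_sum : \sum_i ext_weight (i, true) = 1.
Proof.
rewrite (bigID (mem I)) /= [X in _ + X](bigD1 delta) //=.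
rewrite [X in _ + (_ + X)]big1 ?addr0; last first.
  by move=> i /andP [iNI iNd]; rewrite (negbTE iNI) (negbTE iNd).
rewrite (negbTE deltaNI) eqxx -[RHS](subrK lamI) addrC; congr (_ + _).
by apply: eq_bigr => i /= ->.
Qed.

Lemma ext_weight_gt0 j : j \in ext_index -> 0 < ext_weight j.
Proof.
case: j => i [|]; rewrite inE /=; case: ifP => [_ _ | _] //=.
  by move=> /eqP ->; rewrite eqxx subr_gt0.
by move=> _; case: ifP => _; [rewrite subr_gt0 ltrBlDl -ltrBlDr | ].
Qed.

Lemma ext_weight_out j : j \notin ext_index -> ext_weight j = 0.
Proof.
case: j => i [|]; rewrite inE /= ?negb_or ?negbK.
  by case/andP => /negbTE -> /negbTE ->.
by move=> ->.
Qed.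

Lemma ext_weight_balanced :
  \sum_j ext_weight j *: charvec R (ext_set j) = charvec R (p |: N).
Proof.
apply/ext_balancedP; split; last exact: ext_weight_true_sum.
by under eq_bigr do rewrite ext_weight_merge.
Qed.

Lemma ext_weight_sumE :
  \sum_j ext_weight j *: charvec R (ext_set j) =
  \sum_(i in I) lam i *: charvec R (p |: S i)
  + \sum_(i in ~: I | i != delta) lam i *: charvec R (S i)
  + (1 - lamI) *: charvec R (p |: S delta)
  + (lam delta - (1 - lamI)) *: charvec R (S delta).
Proof.
rewrite big_pair_bool big_split /= (bigD1 delta) //= [X in _ + X](bigD1 delta) //=.
rewrite /ext_weight /ext_set /= (negbTE deltaNI) eqxx.
rewrite (addrC ((1 - lamI) *: _)) (addrC ((lam delta - _) *: _)) addrACA !addrA.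
congr (_ + _ + _ + _); rewrite big_mkcond [RHS]big_mkcond /=; apply: eq_bigr => i _.
  have [-> | _] := eqVneq i delta; first by rewrite /= (negbTE deltaNI).
  by case: ifP; rewrite ?scale0r.
rewrite inE; have [-> | _] := eqVneq i delta; first by rewrite andbF.
by rewrite andbT; case: ifP; rewrite ?scale0r.
Qed.

Lemma ext_weights_unique (w : 'I_k * bool -> R) :
  (forall j, 0 <= w j) -> (forall j, j \notin ext_index -> w j = 0) ->
  \sum_j w j *: charvec R (ext_set j) = charvec R (p |: N) ->
  forall j, w j = ext_weight j.
Proof.
move=> w_ge0 w_out /ext_balancedP [w_merge w_p].
have merged i : w (i, true) + w (i, false) = lam i.
  have merged_ge0 l : 0 <= w (l, true) + w (l, false) by rewrite addr_ge0.
  exact: (minimal_balanced_weightsE S_inj C_min lam_gt0 lam_bal merged_ge0 w_merge).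
have true_Nd (i : 'I_k) : i != delta -> w (i, true) = ext_weight (i, true).
  move=> iNd; rewrite /ext_weight; case: ifP => iI.
    by rewrite -(merged i) (w_out (i, false)) ?addr0 // inE /= iI.
  by rewrite (negbTE iNd) w_out // inE /= iI (negbTE iNd).
have w_true (i : 'I_k) : w (i, true) = ext_weight (i, true).
  have [-> | /true_Nd //] := eqVneq i delta.
  move: w_p; rewrite -ext_weight_true_sum (bigD1 delta) //= [RHS](bigD1 delta) //=.
  by rewrite (eq_bigr _ true_Nd) => /addIr.
case=> i [|] //; apply: (@addrI _ (w (i, true))).
by rewrite merged {1}w_true ext_weight_merge.
Qed.

Lemma ext_minimal_balanced : minimal_balanced R (p |: N) (ext_set @: ext_index).
Proof.
have ext_set_sub j : ext_set j != set0 /\ ext_set j \subset p |: N.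
  case: j => i [|]; rewrite /ext_set /=; split.
  - by apply/set0Pn; exists p; rewrite setU11.
  - exact/setUS/S_subset.
  - exact: S_neq0.
  - exact: subset_trans (S_subset i) (subsetUr _ _).
split.
  apply: balanced_imset ext_weight_gt0 _ => [j _ | ]; first exact: ext_set_sub.
  rewrite -ext_weight_balanced [RHS](bigID (mem ext_index)) /= [X in _ + X]big1 ?addr0 //.
  by move=> j /ext_weight_out ->; rewrite scale0r.
move=> B /properP [sB [X XC XNB]] B_bal.
have [w [w_ge0 w_pos w_out w_bal]] :=
  balanced_sub_imset_weights (in2W ext_set_inj) B_bal sB.
apply: (negP XNB); case/imsetP: XC => j jP ->; apply: w_pos => //.
by rewrite (ext_weights_unique w_ge0 w_out w_bal) ext_weight_gt0.
Qed.

End Extension.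

Theorem lemma4p3 (R : realFieldType) (T : finType) (N : {set T}) (p : T)
  (k : nat) (S : 'I_k -> {set T}) (lam : 'I_k -> R) (I : {set 'I_k}) (delta : 'I_k) :
  N != set0 -> p \notin N ->
  injective S ->
  minimal_balanced R N [set S i | i : 'I_k] ->
  (forall i, 0 < lam i) ->
  \sum_(i < k) lam i *: charvec R (S i) = charvec R N ->
  delta \notin I ->
  \sum_(i in I) lam i < 1 ->
  1 - lam delta < \sum_(i in I) lam i ->
  minimal_balanced R (p |: N)
    ([set p |: S i | i in I] :|: [set S i | i in ~: I] :|: [set p |: S delta])
  /\ \sum_(i in I) lam i *: charvec R (p |: S i)
     + \sum_(i in ~: I | i != delta) lam i *: charvec R (S i)
     + (1 - \sum_(i in I) lam i) *: charvec R (p |: S delta)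
     + (lam delta - (1 - \sum_(i in I) lam i)) *: charvec R (S delta)
     = charvec R (p |: N).
Proof.
move=> _ pNN S_inj C_min lam_gt0 lam_bal deltaNI lamI_lt1 lamI_gt.
rewrite ext_collectionE -(ext_weight_sumE p S lam deltaNI).
by split; [apply: ext_minimal_balanced | apply: ext_weight_balanced].
Qed.
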